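(* Let $\mathrm{Cl}_{p,q}$ be a non-degenerate real Clifford algebra with generators $e_1,\dots,e_n$ and extended basis $\mathbf{B}$ as below, and write $e_Le_{L'}=m_{\lambda\lambda'}e_{L\triangle L'}$ for blades $e_L,e_{L'}\in\mathbf{B}$ with ordinals $\lambda,\lambda'$. Let $S,T$ be disjoint multi-indices with $S\prec T$ (every index in $S$ smaller than every index in $T$). If $e_L,e_{L'}\in\mathbf{B}$ satisfy $e_Le_{L'}=m_{\lambda\lambda'}e_{S\triangle T}$, then there is a blade $e_M\in\mathbf{B}$ (ordinal $\mu$) with $e_Le_M=m_{\lambda\mu}e_S$ and $e_Me_{L'}=m_{\mu\lambda'}e_T$, and \[ m_{\lambda\lambda'}=m_{\lambda\mu}\,\sigma_\mu\,m_{\mu\lambda'} . \]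
   Context: Generators satisfy $e_ie_j=-e_je_i$ ($i\ne j$), $e_i^2=\sigma_i\in\{\pm1\}$. For $S=(s_1<\dots<s_m)$, $e_S=e_{s_1}\cdots e_{s_m}$, $e_\emptyset=1$. $\mathbf{B}$ lists all $2^n$ blades in a fixed total order extending $e_i\prec e_j$ for $i<j$; blades are indexed by their ordinal. Products of blades satisfy $e_Me_N=m_{MN}e_{M\triangle N}$ with $m_{MN}\in\{\pm1\}$, where $\triangle$ is symmetric difference; $\sigma_\mu=\langle e_Me_M\rangle_0\in\{\pm1\}$ for the blade $e_M$ of ordinal $\mu$. *)

From mathcomp Require Import all_boot all_order all_algebra.
Set Implicit Arguments. Unset Strict Implicit. Unset Printing Implicit Defensive.
Import GRing.Theory Num.Theory.
Local Open Scope ring_scope.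

(* Blades e_S of a Clifford algebra with generators e_0..e_{n-1} (0-based),
   indexed by subsets S : {set 'I_n}; e_S = e_{s1} ... e_{sm}, s1 < ... < sm.
   The signature is sigma : 'I_n -> int with e_i^2 = sigma i in {1,-1}. *)

Definition symd (n : nat) (A B : {set 'I_n}) : {set 'I_n} := (A :\: B) :|: (B :\: A).

(* e_i * e_N = gen_sign i N * e_{ {i} (+) N }: e_i anticommutes past the
   generators of N smaller than i, then e_i e_i = sigma i if i \in N. *)
Definition gen_sign (n : nat) (sigma : 'I_n -> int) (i : 'I_n) (N : {set 'I_n}) : int :=
  (-1) ^+ #|[set j in N | (j < i)%N]| * (if i \in N then sigma i else 1).

(* left multiplication of e_N by the word e_{w1} e_{w2} ... e_{wk} :
   returns (sign, resulting blade index set) *)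
Fixpoint word_mul (n : nat) (sigma : 'I_n -> int) (w : seq 'I_n) (N : {set 'I_n})
  : int * {set 'I_n} :=
  match w with
  | [::] => (1, N)
  | i :: w' => let p := word_mul sigma w' N in
               (gen_sign sigma i p.2 * p.1, symd [set i] p.2)
  end.

(* e_M e_N = blade_sign sigma M N * e_{M (+) N}; enum M is increasing. *)
Definition blade_mul (n : nat) (sigma : 'I_n -> int) (M N : {set 'I_n}) :=
  word_mul sigma (enum M) N.
Definition blade_sign (n : nat) (sigma : 'I_n -> int) (M N : {set 'I_n}) : int :=
  (blade_mul sigma M N).1.

From mathcomp Require Import all_boot all_order all_algebra ring.
Set Implicit Arguments. Unset Strict Implicit. Unset Printing Implicit Defensive.
Import GRing.Theory Num.Theory.
Local Open Scope ring_scope.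

(* The sign m(M, N) of e_M e_N is the product, over all pairs (i, j) in M x N,
   of the sign e_i picks up when it meets e_j: -1 if j < i (one transposition),
   sigma i if j = i, and 1 if j > i.  All these pair signs square to 1, so m is
   multiplicative in each argument with respect to symmetric difference, and
   expanding m(L △ M, M △ L') gives, for every M,
     m(L, L') = m(L, M) m(M, M) m(M, L') m(L △ M, M △ L').
   For M = L △ S we get L △ M = S and M △ L' = T, and m(S, T) = 1 because
   every index of S is below every index of T. *)

Section SymmetricDifference.
Variable n : nat.
Implicit Types A B C : {set 'I_n}.

Lemma in_symd A B x : (x \in symd A B) = (x \in A) (+) (x \in B).
Proof. by rewrite !inE; case: (x \in A); case: (x \in B). Qed.

Lemma symdC A B : symd A B = symd B A.
Proof. by apply/setP => x; rewrite !in_symd addbC. Qed.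

Lemma symdA A B C : symd A (symd B C) = symd (symd A B) C.
Proof. by apply/setP => x; rewrite !in_symd addbA. Qed.

Lemma symdK A B : symd A (symd A B) = B.
Proof. by apply/setP => x; rewrite !in_symd addKb. Qed.

Lemma prod_symd (R : comPzRingType) (F : 'I_n -> R) A B :
  (forall i, F i * F i = 1) ->
  \prod_(i in symd A B) F i = \prod_(i in A) F i * \prod_(i in B) F i.
Proof.
move=> F_sq; rewrite !(big_mkcond (fun i => i \in _)) -big_split.
apply: eq_bigr => i _; rewrite in_symd.
by case: (i \in A); case: (i \in B); rewrite /= ?mulr1 ?mul1r ?F_sq.
Qed.

End SymmetricDifference.

Lemma prod_sq (R : comPzRingType) (I : finType) (P : pred I) (F : I -> R) :
  (forall i, F i * F i = 1) -> (\prod_(i in P) F i) * (\prod_(i in P) F i) = 1.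
Proof. by move=> F_sq; rewrite -big_split big1 // => i _; apply: F_sq. Qed.

Section BladeSign.
Variable n : nat.
Variable sigma : 'I_n -> int.
Hypothesis sigma_sign : forall i, sigma i = 1 \/ sigma i = -1.
Implicit Types (A B L M N S T : {set 'I_n}) (i j : 'I_n).

Definition pair_sign i j : int :=
  if (j < i)%N then -1 else if j == i then sigma i else 1.

Lemma gen_signE i N : gen_sign sigma i N = \prod_(j in N) pair_sign i j.
Proof.
rewrite (bigID (fun j : 'I_n => (j < i)%N)) /=; congr (_ * _).
  rewrite (eq_bigr (fun=> -1)) => [|j /andP[_ j_lt]]; last by rewrite /pair_sign j_lt.
  by rewrite prodr_const; congr (_ ^+ _); apply: eq_card => j; rewrite !inE.
rewrite (bigID (pred1 i)) /= [X in _ * X]big1 => [|j /andP[/andP[_ /negbTE j_ge] /negbTE j_ne]];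
  last by rewrite /pair_sign j_ge j_ne.
rewrite mulr1; have [i_in_N | i_notin_N] := boolP (i \in N).
  rewrite (big_pred1 i) => [|j]; first by rewrite /pair_sign ltnn eqxx.
  by case: (eqVneq j i) => [->|/negbTE j_ne]; rewrite /= ?i_in_N ?ltnn ?j_ne ?andbF ?eqxx.
by rewrite big_pred0 // => j; case: (eqVneq j i) => [->|]; rewrite ?(negbTE i_notin_N) ?andbF.
Qed.

Lemma pair_sign_lt i j : (i < j)%N -> pair_sign i j = 1.
Proof. by move=> ij; rewrite /pair_sign ltnNge (ltnW ij) -val_eqE /= gtn_eqF. Qed.

Lemma gen_sign_symd_gt i A N :
  (forall j, j \in A -> (i < j)%N) -> gen_sign sigma i (symd A N) = gen_sign sigma i N.
Proof.
move=> A_gt; have notin_A j : (j <= i)%N -> j \notin A.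
  by move=> j_le; apply/negP => /A_gt; rewrite ltnNge j_le.
rewrite /gen_sign in_symd (negbTE (notin_A i (leqnn i))); congr (_ ^+ _ * _).
apply: eq_card => j; rewrite !inE.
by case: (ltnP j i) => [/ltnW/notin_A/negbTE ->|]; rewrite ?andbF ?andbT.
Qed.

Lemma word_mulE w N : sorted (relpre val ltn) w ->
  word_mul sigma w N = (\prod_(i <- w) gen_sign sigma i N, symd [set x in w] N).
Proof.
elim: w => [|i w IHw] w_sorted /=.
  by rewrite big_nil; congr pair; apply/setP => x; rewrite in_symd !inE.
have /allP w_gt := order_path_min (fun a b c => @ltn_trans (val a) (val b) (val c)) w_sorted.
have i_notin_w : i \notin w by apply/negP => /w_gt; rewrite /= ltnn.
rewrite IHw ?(path_sorted w_sorted) //= big_cons gen_sign_symd_gt => [|j];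
  last by rewrite inE => /w_gt.
congr pair; rewrite symdA; congr symd.
by apply/setP => x; rewrite in_symd !inE; case: eqVneq => [->|]; rewrite ?(negbTE i_notin_w).
Qed.

Lemma sorted_enum_set M : sorted (relpre val ltn) (enum M).
Proof.
rewrite /enum_mem -enumT; apply: sorted_filter.
  by move=> a b c; apply: ltn_trans.
by rewrite -sorted_map val_enum_ord iota_ltn_sorted.
Qed.

Lemma blade_sign_prod M N :
  blade_sign sigma M N = \prod_(i in M) \prod_(j in N) pair_sign i j.
Proof.
rewrite /blade_sign /blade_mul word_mulE ?sorted_enum_set //= big_enum.
by apply: eq_bigr => i _; rewrite gen_signE.
Qed.

Lemma blade_mulE M N : blade_mul sigma M N = (blade_sign sigma M N, symd M N).
Proof. by rewrite /blade_sign /blade_mul word_mulE ?sorted_enum_set // set_enum. Qed.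

Lemma pair_sign_sq i j : pair_sign i j * pair_sign i j = 1.
Proof.
rewrite /pair_sign; case: ifP => _; first by rewrite mulrNN mulr1.
by case: ifP => _; [case: (sigma_sign i) => ->|]; rewrite ?mulrNN mulr1.
Qed.

Lemma blade_sign_sq M N : blade_sign sigma M N * blade_sign sigma M N = 1.
Proof. by rewrite blade_sign_prod; apply: prod_sq => i; apply: prod_sq; apply: pair_sign_sq. Qed.

Lemma blade_sign_symdl A B N :
  blade_sign sigma (symd A B) N = blade_sign sigma A N * blade_sign sigma B N.
Proof. by rewrite !blade_sign_prod prod_symd // => i; apply: prod_sq; apply: pair_sign_sq. Qed.

Lemma blade_sign_symdr M A B :
  blade_sign sigma M (symd A B) = blade_sign sigma M A * blade_sign sigma M B.
Proof.
rewrite !blade_sign_prod -big_split; apply: eq_bigr => i _.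
by rewrite prod_symd // => j; apply: pair_sign_sq.
Qed.

Lemma blade_sign_lt S T :
  (forall s t, s \in S -> t \in T -> (s < t)%N) -> blade_sign sigma S T = 1.
Proof.
move=> ST_lt; rewrite blade_sign_prod big1 // => s s_in_S.
by rewrite big1 // => t t_in_T; apply/pair_sign_lt/ST_lt.
Qed.

Lemma blade_sign_split L L' M :
  blade_sign sigma L L' = blade_sign sigma L M * blade_sign sigma M M *
    blade_sign sigma M L' * blade_sign sigma (symd L M) (symd M L').
Proof.
rewrite blade_sign_symdl !blade_sign_symdr.
move: (blade_sign_sq L M) (blade_sign_sq M M) (blade_sign_sq M L').
move: (blade_sign sigma L L') (blade_sign sigma L M) (blade_sign sigma M M)
  (blade_sign sigma M L') => a b c d sq_b sq_c sq_d.
transitivity (a * (b * b) * (c * c) * (d * d)); last by ring.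
by rewrite sq_b sq_c sq_d !mulr1.
Qed.

End BladeSign.

Theorem lemma2 (n : nat) (sigma : 'I_n -> int)
  (hsigma : forall i, sigma i = 1 \/ sigma i = -1)
  (S T L L' : {set 'I_n})
  (hdisj : [disjoint S & T])
  (hST : forall s t, s \in S -> t \in T -> (s < t)%N)
  (hLL' : blade_mul sigma L L' = (blade_sign sigma L L', symd S T)) :
  exists M : {set 'I_n},
    blade_mul sigma L M = (blade_sign sigma L M, S) /\
    blade_mul sigma M L' = (blade_sign sigma M L', T) /\
    blade_sign sigma L L' =
      blade_sign sigma L M * blade_sign sigma M M * blade_sign sigma M L'.
Proof.
move: hLL'; rewrite blade_mulE => -[LL'_ST].
pose M := symd L S.
have LM_S : symd L M = S := symdK L S.
have ML'_T : symd M L' = T by rewrite /M [symd L S]symdC -symdA LL'_ST symdK.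
exists M; rewrite !blade_mulE LM_S ML'_T; split=> //; split=> //.
by rewrite (blade_sign_split hsigma L L' M) LM_S ML'_T (blade_sign_lt sigma hST) mulr1.
Qed.
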